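(* Let $m\ge 1$ and consider any complete run of the labeled chip-firing process on $\mathbb{Z}$ starting with $2m$ chips at site $0$. For integers $x,y\ge 0$, let the firing move $(x,y)$ denote the $(\min(x,y)+1)$-th to last firing move performed at site $x-y$ in this run (when it exists). Let $(x,y)$ be a firing move with $0\le x,y\le m-1$. Then: (1) the firing move $(x,y)$ takes place after the firing moves $(x+1,y)$ and $(x,y+1)$, whenever these firing moves exist; (2) when the firing move $(x,y)$ occurs, there are exactly $2$ chips present at the site that is firing.
   Context: Labeled chip-firing on the infinite path graph $\mathbb{Z}$ (each integer $i$ adjacent to $i-1$ and $i+1$): $2m$ chips carrying distinct labels, labeled $-m,\dots,-1,1,\dots,m$, are placed at site $0$. A firing move consists of choosing two chips with labels $a<b$ located at a common site $i$, and moving chip $a$ to site $i-1$ and chip $b$ to site $i+1$. A complete run is a sequence of firing moves, each legal in the configuration it is applied to, ending in a configuration where all chips occupy distinct sites (so no further firing move is possible). *)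

From Stdlib Require Import ZArith List Lia.
Import ListNotations.
Open Scope Z_scope.

Definition labels (m : nat) : list Z :=
  map (fun i => - Z.of_nat i) (seq 1 m) ++ map Z.of_nat (seq 1 m).

Definition is_label (m : nat) (c : Z) : Prop := In c (labels m).

(* A configuration assigns to every label its site. *)
Definition config := Z -> Z.

Definition init_config : config := fun _ => 0.

(* A firing move is a pair (a, b) of labels, a < b: a goes left, b goes right. *)
Definition move := (Z * Z)%type.

Definition fire (p : config) (mv : move) : config :=
  fun c => if Z.eqb c (fst mv) then p (fst mv) - 1
           else if Z.eqb c (snd mv) then p (snd mv) + 1
           else p c.

Definition after (ms : list move) : config := fold_left fire ms init_config.

Definition config_before (ms : list move) (k : nat) : config :=
  after (firstn k ms).

Definition legal (m : nat) (p : config) (mv : move) : Prop :=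
  is_label m (fst mv) /\ is_label m (snd mv) /\ fst mv < snd mv /\
  p (fst mv) = p (snd mv).

Definition valid_run (m : nat) (ms : list move) : Prop :=
  forall k, (k < length ms)%nat ->
    legal m (config_before ms k) (nth k ms (0, 0)).

Definition complete_run (m : nat) (ms : list move) : Prop :=
  valid_run m ms /\
  forall c d, is_label m c -> is_label m d -> c <> d -> after ms c <> after ms d.

Definition fire_site (ms : list move) (k : nat) : Z :=
  config_before ms k (fst (nth k ms (0, 0))).

Definition moves_at (ms : list move) (s : Z) : list nat :=
  filter (fun k => Z.eqb (fire_site ms k) s) (seq 0 (length ms)).

(* firing move (x,y): the (min(x,y)+1)-th to last move at site x-y, if any;
   returned as its index in the run *)
Definition fmove (ms : list move) (x y : nat) : option nat :=
  nth_error (rev (moves_at ms (Z.of_nat x - Z.of_nat y))) (Nat.min x y).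

Definition chips_at (m : nat) (p : config) (s : Z) : nat :=
  length (filter (fun c => Z.eqb (p c) s) (labels m)).

From Stdlib Require Import ZArith List Lia FinFun.
Import ListNotations.
Open Scope Z_scope.

(* Write u_k(s) for the number of firings at site s among the first k moves. A firing
   moves two chips from s to s - 1 and s + 1, so the number of chips at s is
   2m[s = 0] + u_k(s - 1) + u_k(s + 1) - 2 u_k(s). For U(s) = T(max(0, m - |s|)), with T the
   triangular numbers, the same expression is the indicator of 1 <= |s| <= m. As a firing
   site carries at least two chips, u_k <= U throughout; at the end every site carries at
   most one chip, so U - u is nonnegative, compactly supported and convex away from the
   origin, which forces u = U. Hence h_k = U - u_k counts the firings still to come at each
   site, and the firing move (x,y) is a firing at site x - y with
   h_k = min(x,y) + 1 <= m - |x - y|.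
   The invariant is that min(h_k(s), max(0, m - |s|)) drops by 0 or 1 at each step away from
   the origin. At a firing site where h_k <= m - |s|, this and the two chips present pin down
   h_k at both neighbours and leave exactly two chips there; comparing h at the sites
   x - y +- 1 before and after then orders the moves. *)

Lemma labels_NoDup (m : nat) : NoDup (labels m).
Proof.
  unfold labels; apply NoDup_app.
  - apply Injective_map_NoDup; [intros i j; lia | apply seq_NoDup].
  - apply Injective_map_NoDup; [intros i j; lia | apply seq_NoDup].
  - intros c Hneg Hpos.
    apply in_map_iff in Hneg as [i [<- Hi]]; apply in_map_iff in Hpos as [j [Hj Hj']].
    apply in_seq in Hi; apply in_seq in Hj'; lia.
Qed.

Lemma length_labels (m : nat) : length (labels m) = (2 * m)%nat.
Proof. unfold labels; rewrite length_app, !length_map, length_seq; lia. Qed.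

Lemma length_filter_update (L : list Z) (f g : Z -> bool) (a : Z) :
  NoDup L -> In a L -> (forall c, c <> a -> f c = g c) ->
  Z.of_nat (length (filter f L)) - Z.b2z (f a) =
  Z.of_nat (length (filter g L)) - Z.b2z (g a).
Proof.
  intros HL; induction HL as [|c L Hc HL IH]; intros Ha Hfg; [destruct Ha|].
  cbn [filter]; destruct (Z.eq_dec c a) as [<-|Hca].
  - rewrite (filter_ext_in f g L) by (intros d Hd; apply Hfg; intros ->; contradiction).
    destruct (f c), (g c); cbn [length Z.b2z]; lia.
  - destruct Ha as [->|Ha]; [contradiction|].
    rewrite (Hfg c Hca); specialize (IH Ha Hfg).
    destruct (g c); cbn [length]; lia.
Qed.

Lemma fire_fst (p : config) (a b : Z) : fire p (a, b) a = p a - 1.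
Proof. unfold fire; cbn; now rewrite Z.eqb_refl. Qed.

Lemma fire_snd (p : config) (a b : Z) : a <> b -> fire p (a, b) b = p b + 1.
Proof.
  intros Hab; unfold fire; cbn.
  now rewrite (proj2 (Z.eqb_neq b a)) by congruence; rewrite Z.eqb_refl.
Qed.

Lemma fire_other (p : config) (a b c : Z) : c <> a -> c <> b -> fire p (a, b) c = p c.
Proof.
  intros Hca Hcb; unfold fire; cbn.
  now rewrite (proj2 (Z.eqb_neq c a) Hca), (proj2 (Z.eqb_neq c b) Hcb).
Qed.

Lemma chips_at_fire (m : nat) (p : config) (a b s : Z) :
  is_label m a -> is_label m b -> a <> b ->
  Z.of_nat (chips_at m (fire p (a, b)) s) =
  Z.of_nat (chips_at m p s) - Z.b2z (p a =? s) - Z.b2z (p b =? s)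
    + Z.b2z (p a - 1 =? s) + Z.b2z (p b + 1 =? s).
Proof.
  intros Ha Hb Hab; unfold chips_at.
  set (f := fun c => fire p (a, b) c =? s); set (g := fun c => p c =? s).
  set (h := fun c => if c =? a then f c else g c).
  assert (Efh : Z.of_nat (length (filter f (labels m))) - Z.b2z (f b) =
                Z.of_nat (length (filter h (labels m))) - Z.b2z (h b)).
  { apply length_filter_update; [apply labels_NoDup | exact Hb |].
    intros c Hcb; unfold h; destruct (Z.eqb_spec c a) as [->|Hca]; [reflexivity|].
    unfold f, g; now rewrite fire_other. }
  assert (Ehg : Z.of_nat (length (filter h (labels m))) - Z.b2z (h a) =
                Z.of_nat (length (filter g (labels m))) - Z.b2z (g a)).
  { apply length_filter_update; [apply labels_NoDup | exact Ha |].
    intros c Hca; unfold h; now rewrite (proj2 (Z.eqb_neq c a) Hca). }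
  unfold h in Efh, Ehg; rewrite Z.eqb_refl in Ehg.
  rewrite (proj2 (Z.eqb_neq b a)) in Efh by congruence.
  unfold f, g in *; rewrite fire_fst in Ehg; rewrite fire_snd in Efh by exact Hab.
  lia.
Qed.

Definition initial_chips (m : nat) (s : Z) : Z := if s =? 0 then 2 * Z.of_nat m else 0.

Lemma chips_at_init (m : nat) (s : Z) :
  Z.of_nat (chips_at m init_config s) = initial_chips m s.
Proof.
  unfold chips_at, init_config, initial_chips; cbv beta.
  destruct (Z.eqb_spec 0 s) as [<-|Hs].
  - rewrite filter_true, length_labels, Z.eqb_refl; lia.
  - rewrite filter_false, (proj2 (Z.eqb_neq s 0)) by congruence; reflexivity.
Qed.

(* [t] is the neighbour of [s] farther from the origin; both neighbours of 0 qualify. *)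
Definition outward (s t : Z) : Prop := Z.abs t = Z.abs s + 1 /\ Z.abs (t - s) = 1.

Lemma outward_cases (s t : Z) : outward s t -> (0 <= s /\ t = s + 1) \/ (s <= 0 /\ t = s - 1).
Proof. unfold outward; lia. Qed.

Definition tent (m : nat) (s : Z) : Z := Z.max 0 (Z.of_nat m - Z.abs s).

Lemma tent_outward (m : nat) (s t : Z) : outward s t -> 0 <= tent m s - tent m t <= 1.
Proof. unfold tent, outward; lia. Qed.

Definition final_odometer (m : nat) (s : Z) : Z := tent m s * (tent m s + 1) / 2.

Definition final_chips (m : nat) (s : Z) : Z :=
  if s =? 0 then 0 else if Z.abs s <=? Z.of_nat m then 1 else 0.

Lemma final_odometer_outward (m : nat) (s t : Z) :
  outward s t -> final_odometer m s = final_odometer m t + tent m s.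
Proof.
  intros Hst; unfold final_odometer.
  destruct (Z.lt_ge_cases (Z.abs s) (Z.of_nat m)).
  - assert (Hstep : tent m s = tent m t + 1) by (unfold tent, outward in *; lia).
    rewrite Hstep.
    replace ((tent m t + 1) * (tent m t + 1 + 1))
      with (tent m t * (tent m t + 1) + (tent m t + 1) * 2) by ring.
    rewrite Z_div_plus_full by lia; ring.
  - assert (tent m s = 0 /\ tent m t = 0) as [-> ->] by (unfold tent, outward in *; lia).
    reflexivity.
Qed.

Lemma final_odometer_nonneg (m : nat) (s : Z) : 0 <= final_odometer m s.
Proof.
  apply Z.div_pos; [|lia].
  apply Z.mul_nonneg_nonneg; unfold tent; lia.
Qed.

Lemma tent_le_final_odometer (m : nat) (s : Z) : tent m s <= final_odometer m s.
Proof.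
  set (t := if 0 <=? s then s + 1 else s - 1).
  assert (Hst : outward s t) by (unfold outward, t; destruct (Z.leb_spec 0 s); lia).
  rewrite (final_odometer_outward m s t Hst); pose proof (final_odometer_nonneg m t); lia.
Qed.

Lemma final_odometer_vanishes (m : nat) (s : Z) :
  Z.of_nat m <= Z.abs s -> final_odometer m s = 0.
Proof.
  intros Hs; unfold final_odometer.
  replace (tent m s) with 0 by (unfold tent; lia); reflexivity.
Qed.

Lemma final_odometer_laplacian (m : nat) (s : Z) :
  initial_chips m s + final_odometer m (s - 1) + final_odometer m (s + 1)
    - 2 * final_odometer m s = final_chips m s.
Proof.
  unfold initial_chips, final_chips.
  destruct (Z.lt_trichotomy s 0) as [Hs|[->|Hs]].
  - pose proof (final_odometer_outward m (s + 1) s ltac:(unfold outward; lia)).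
    pose proof (final_odometer_outward m s (s - 1) ltac:(unfold outward; lia)).
    destruct (Z.eqb_spec s 0); [lia|].
    destruct (Z.leb_spec (Z.abs s) (Z.of_nat m)); unfold tent in *; lia.
  - pose proof (final_odometer_outward m 0 (0 - 1) ltac:(unfold outward; lia)).
    pose proof (final_odometer_outward m 0 (0 + 1) ltac:(unfold outward; lia)).
    cbn [Z.eqb]; unfold tent in *; lia.
  - pose proof (final_odometer_outward m (s - 1) s ltac:(unfold outward; lia)).
    pose proof (final_odometer_outward m s (s + 1) ltac:(unfold outward; lia)).
    destruct (Z.eqb_spec s 0); [lia|].
    destruct (Z.leb_spec (Z.abs s) (Z.of_nat m)); unfold tent in *; lia.
Qed.

Lemma final_chips_le_1 (m : nat) (s : Z) : final_chips m s <= 1.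
Proof.
  unfold final_chips; destruct (s =? 0); [lia|].
  destruct (Z.abs s <=? Z.of_nat m); lia.
Qed.

Section ConvexHalfLine.

Variables (d : Z -> Z) (M : Z).
Hypothesis d_vanishes : forall s, M <= s -> d s = 0.
Hypothesis d_convex : forall s, 1 <= s <= M -> 2 * d s <= d (s - 1) + d (s + 1).

Lemma convex_vanishing_nonincreasing (s : Z) : 0 <= s -> d (s + 1) <= d s.
Proof.
  assert (Hdown : forall n, 0 <= n -> forall t, 0 <= t -> M - n <= t -> d (t + 1) <= d t).
  { intros n Hn; pattern n; apply natlike_ind; [| |exact Hn].
    - intros t _ Ht; rewrite !d_vanishes by lia; lia.
    - intros k Hk IH t Ht0 Ht.
      destruct (Z_le_gt_dec (M - k) t); [now apply IH|].
      pose proof (IH (t + 1) ltac:(lia) ltac:(lia)).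
      pose proof (d_convex (t + 1) ltac:(lia)) as Hconv.
      rewrite Z.add_simpl_r in Hconv; lia. }
  intros Hs; apply (Hdown (Z.max 0 (M - s))); lia.
Qed.

Lemma convex_vanishing_flat_zero : d 1 = d 0 -> forall s, 0 <= s -> d s = 0.
Proof.
  intros Hflat.
  assert (Hconst : forall s, 0 <= s -> d (s + 1) = d s).
  { intros s Hs; pattern s; apply natlike_ind; [exact Hflat| |exact Hs].
    intros t Ht IH; unfold Z.succ.
    pose proof (convex_vanishing_nonincreasing (t + 1) ltac:(lia)).
    destruct (Z_le_gt_dec (t + 1) M).
    - pose proof (d_convex (t + 1) ltac:(lia)) as Hconv.
      rewrite Z.add_simpl_r in Hconv; lia.
    - rewrite !d_vanishes by lia; reflexivity. }
  assert (Hshift : forall n, 0 <= n -> forall s, 0 <= s -> d s = d (s + n)).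
  { intros n Hn; pattern n; apply natlike_ind; [| |exact Hn].
    - intros s _; now rewrite Z.add_0_r.
    - intros k Hk IH s Hs; unfold Z.succ.
      rewrite Z.add_assoc, Hconst by lia; now apply IH. }
  intros s Hs; rewrite (Hshift (Z.max 0 (M - s)) ltac:(lia) s Hs).
  apply d_vanishes; lia.
Qed.

End ConvexHalfLine.

Lemma convex_off_origin_zero (d : Z -> Z) (M : Z) :
  (forall s, 0 <= d s) ->
  (forall s, M <= Z.abs s -> d s = 0) ->
  (forall s, 1 <= Z.abs s <= M -> 2 * d s <= d (s - 1) + d (s + 1)) ->
  2 * d 0 <= d (-1) + d 1 + 1 ->
  forall s, d s = 0.
Proof.
  intros Hnonneg Hvan Hconv Horigin.
  set (e := fun s => d (- s)).
  assert (He_van : forall s, M <= s -> e s = 0) by (intros s Hs; apply Hvan; lia).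
  assert (He_conv : forall s, 1 <= s <= M -> 2 * e s <= e (s - 1) + e (s + 1)).
  { intros s Hs; unfold e.
    replace (- (s - 1)) with (- s + 1) by ring; replace (- (s + 1)) with (- s - 1) by ring.
    pose proof (Hconv (- s) ltac:(lia)); lia. }
  assert (Hd_van : forall s, M <= s -> d s = 0) by (intros s Hs; apply Hvan; lia).
  assert (Hd_conv : forall s, 1 <= s <= M -> 2 * d s <= d (s - 1) + d (s + 1))
    by (intros s Hs; apply Hconv; lia).
  pose proof (convex_vanishing_nonincreasing d M Hd_van Hd_conv 0 ltac:(lia)) as Hd1.
  pose proof (convex_vanishing_nonincreasing e M He_van He_conv 0 ltac:(lia)) as He1.
  pose proof (convex_vanishing_flat_zero d M Hd_van Hd_conv) as Hd_zero.
  pose proof (convex_vanishing_flat_zero e M He_van He_conv) as He_zero.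
  unfold e in *; cbn in Hd1, He1, He_zero.
  (* Both one-sided slopes at 0 are nonpositive integers with sum at least -1. *)
  assert (Hsides : d 1 = d 0 \/ d (-1) = d 0) by lia.
  assert (Hboth : (forall s, 0 <= s -> d s = 0) /\ (forall s, 0 <= s -> d (- s) = 0)).
  { destruct Hsides as [Hflat|Hflat].
    - pose proof (Hd_zero Hflat 0 ltac:(lia)); pose proof (Hnonneg (-1)).
      split; [exact (Hd_zero Hflat)|]; apply He_zero; lia.
    - pose proof (He_zero Hflat 0 ltac:(lia)); pose proof (Hnonneg 1).
      split; [|exact (He_zero Hflat)]; apply Hd_zero; cbn in *; lia. }
  intros s; destruct Hboth as [Hpos Hneg]; destruct (Z_le_gt_dec 0 s); [now apply Hpos|].
  replace s with (- - s) by ring; apply Hneg; lia.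
Qed.

Lemma firstn_succ {A : Type} (l : list A) (k : nat) (d : A) :
  (k < length l)%nat -> firstn (S k) l = firstn k l ++ [nth k l d].
Proof.
  revert k; induction l as [|x l IH]; intros k Hk; cbn in Hk; [lia|].
  destruct k as [|k]; [reflexivity|].
  rewrite firstn_cons, (IH k) by lia; reflexivity.
Qed.

Lemma config_before_succ (ms : list move) (k : nat) : (k < length ms)%nat ->
  config_before ms (S k) = fire (config_before ms k) (nth k ms (0, 0)).
Proof.
  intros Hk; unfold config_before, after.
  now rewrite (firstn_succ _ _ (0, 0)), fold_left_app by exact Hk.
Qed.

Definition fire_count (ms : list move) (k : nat) (s : Z) : Z :=
  Z.of_nat (length (filter (fun i => fire_site ms i =? s) (seq 0 k))).

Lemma fire_count_0 (ms : list move) (s : Z) : fire_count ms 0 s = 0.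
Proof. reflexivity. Qed.

Lemma fire_count_succ (ms : list move) (k : nat) (s : Z) :
  fire_count ms (S k) s = fire_count ms k s + Z.b2z (fire_site ms k =? s).
Proof.
  unfold fire_count; rewrite seq_S, Nat.add_0_l, filter_app, length_app; cbn [filter].
  destruct (fire_site ms k =? s); cbn [length Z.b2z]; lia.
Qed.

Lemma fire_count_nonneg (ms : list move) (k : nat) (s : Z) : 0 <= fire_count ms k s.
Proof. unfold fire_count; lia. Qed.

Lemma fire_count_mono (ms : list move) (k k' : nat) (s : Z) :
  (k <= k')%nat -> fire_count ms k s <= fire_count ms k' s.
Proof.
  induction 1 as [|k' _ IH]; [lia|].
  rewrite fire_count_succ; destruct (fire_site ms k' =? s); cbn [Z.b2z]; lia.
Qed.

Definition chips_before (m : nat) (ms : list move) (k : nat) (s : Z) : Z :=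
  Z.of_nat (chips_at m (config_before ms k) s).

Definition remaining (m : nat) (ms : list move) (k : nat) (s : Z) : Z :=
  final_odometer m s - fire_count ms k s.

Lemma remaining_antitone (m : nat) (ms : list move) (k k' : nat) (s : Z) :
  (k <= k')%nat -> remaining m ms k' s <= remaining m ms k s.
Proof. intros Hkk'; unfold remaining; pose proof (fire_count_mono ms k k' s Hkk'); lia. Qed.

Definition capped_remaining (m : nat) (ms : list move) (k : nat) (s : Z) : Z :=
  Z.min (remaining m ms k s) (tent m s).

Definition staircase (m : nat) (ms : list move) (k : nat) : Prop :=
  forall s t, outward s t -> 0 <= capped_remaining m ms k s - capped_remaining m ms k t <= 1.

Lemma staircase_0 (m : nat) (ms : list move) : staircase m ms 0.
Proof.
  intros s t Hst; unfold capped_remaining, remaining; rewrite !fire_count_0.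
  pose proof (tent_le_final_odometer m s); pose proof (tent_le_final_odometer m t).
  pose proof (tent_outward m s t Hst); lia.
Qed.

Lemma staircase_lower_bounds (m : nat) (ms : list move) (k : nat) (r : Z) :
  staircase m ms k -> remaining m ms k r <= tent m r ->
  (forall t, outward r t -> remaining m ms k r - 1 <= remaining m ms k t) /\
  (forall s, outward s r -> remaining m ms k r <= remaining m ms k s).
Proof.
  intros Hstair Hcap; split; [intros t Ht | intros s Hs];
    [specialize (Hstair r t Ht) | specialize (Hstair s r Hs)];
    unfold capped_remaining in Hstair; lia.
Qed.

Section ValidRun.

Variables (m : nat) (ms : list move).
Hypothesis run_valid : valid_run m ms.

Lemma chips_before_laplacian (k : nat) (s : Z) : (k <= length ms)%nat ->
  chips_before m ms k s = initial_chips m s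
    + fire_count ms k (s - 1) + fire_count ms k (s + 1) - 2 * fire_count ms k s.
Proof.
  revert s; induction k as [|k IH]; intros s Hk.
  - unfold chips_before, config_before; cbn [firstn]; unfold after; cbn [fold_left].
    rewrite chips_at_init, !fire_count_0; lia.
  - destruct (run_valid k ltac:(lia)) as (Ha & Hb & Hab & Hsite).
    unfold chips_before; rewrite config_before_succ, !fire_count_succ by lia.
    unfold fire_site; destruct (nth k ms (0, 0)) as [a b]; cbn [fst snd] in *.
    rewrite chips_at_fire, <- Hsite by (assumption || lia).
    fold (chips_before m ms k s); rewrite IH by lia.
    set (r := config_before ms k a).
    destruct (Z.eqb_spec (r - 1) s), (Z.eqb_spec r s), (Z.eqb_spec (r + 1) s),
      (Z.eqb_spec r (s - 1)), (Z.eqb_spec r (s + 1)); cbn [Z.b2z]; lia.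
Qed.

Lemma two_chips_at_fire_site (k : nat) : (k < length ms)%nat ->
  2 <= chips_before m ms k (fire_site ms k).
Proof.
  intros Hk; destruct (run_valid k Hk) as (Ha & Hb & Hab & Hsite).
  unfold chips_before, chips_at, fire_site.
  destruct (nth k ms (0, 0)) as [a b]; cbn [fst snd] in *.
  assert (Hincl : incl [a; b] (filter (fun c => config_before ms k c =? config_before ms k a)
                                 (labels m))).
  { intros c [<-|[<-|[]]]; apply filter_In; split; try assumption; apply Z.eqb_eq; congruence. }
  assert (Hab' : NoDup [a; b]) by (repeat constructor; cbn; intuition lia).
  pose proof (NoDup_incl_length Hab' Hincl); cbn [length] in *; lia.
Qed.

Lemma fire_count_le_final_odometer (k : nat) : (k <= length ms)%nat ->
  forall s, fire_count ms k s <= final_odometer m s.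
Proof.
  induction k as [|k IH]; intros Hk s.
  - rewrite fire_count_0; apply final_odometer_nonneg.
  - rewrite fire_count_succ.
    destruct (Z.eqb_spec (fire_site ms k) s) as [<-|]; cbn [Z.b2z];
      [|specialize (IH ltac:(lia) s); lia].
    pose proof (two_chips_at_fire_site k ltac:(lia)) as Htwo.
    rewrite chips_before_laplacian in Htwo by lia.
    set (r := fire_site ms k) in *.
    pose proof (final_odometer_laplacian m r); pose proof (final_chips_le_1 m r).
    pose proof (IH ltac:(lia) (r - 1)); pose proof (IH ltac:(lia) (r + 1));
      pose proof (IH ltac:(lia) r).
    lia.
Qed.

Lemma remaining_nonneg (k : nat) (s : Z) : (k <= length ms)%nat -> 0 <= remaining m ms k s.
Proof. intros Hk; unfold remaining; pose proof (fire_count_le_final_odometer k Hk s); lia. Qed.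

Lemma remaining_at_fire_site_pos (k : nat) : (k < length ms)%nat ->
  1 <= remaining m ms k (fire_site ms k).
Proof.
  intros Hk; pose proof (fire_count_le_final_odometer (S k) Hk (fire_site ms k)) as Hle.
  rewrite fire_count_succ, Z.eqb_refl in Hle; unfold remaining; cbn [Z.b2z] in Hle; lia.
Qed.

Lemma chips_before_remaining (k : nat) (s : Z) : (k <= length ms)%nat ->
  chips_before m ms k s = final_chips m s + 2 * remaining m ms k s
    - remaining m ms k (s - 1) - remaining m ms k (s + 1).
Proof.
  intros Hk; rewrite chips_before_laplacian by exact Hk.
  rewrite <- (final_odometer_laplacian m s); unfold remaining; lia.
Qed.

Lemma fire_site_neighbours (k : nat) (r : Z) :
  (k < length ms)%nat -> staircase m ms k -> fire_site ms k = r ->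
  remaining m ms k r <= tent m r ->
  (forall t, outward r t -> remaining m ms k t = remaining m ms k r - 1) /\
  (forall s, outward s r -> remaining m ms k s = remaining m ms k r) /\
  chips_before m ms k r = 2.
Proof.
  intros Hk Hstair Hsite Hcap.
  pose proof (two_chips_at_fire_site k Hk) as Htwo.
  pose proof (remaining_at_fire_site_pos k Hk) as Hpos.
  rewrite Hsite in Htwo, Hpos; rewrite chips_before_remaining in Htwo by lia.
  destruct (staircase_lower_bounds m ms k r Hstair Hcap) as [Hout Hin].
  assert (Hchips : final_chips m r = if r =? 0 then 0 else 1).
  { unfold final_chips; destruct (r =? 0); [reflexivity|].
    destruct (Z.leb_spec (Z.abs r) (Z.of_nat m)); unfold tent in Hcap; lia. }
  rewrite Hchips in Htwo.
  (* The staircase bounds each neighbour from below and the two chips bound their sum from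
     above; the bounds match. *)
  assert (Hsides : remaining m ms k (r - 1) = remaining m ms k r - Z.b2z (r <=? 0) /\
                   remaining m ms k (r + 1) = remaining m ms k r - Z.b2z (0 <=? r)).
  { destruct (Z.lt_trichotomy r 0) as [Hr|[Hr|Hr]].
    - pose proof (Hout (r - 1) ltac:(unfold outward; lia)).
      pose proof (Hin (r + 1) ltac:(unfold outward; lia)).
      destruct (Z.eqb_spec r 0), (Z.leb_spec r 0), (Z.leb_spec 0 r); cbn [Z.b2z]; lia.
    - pose proof (Hout (r - 1) ltac:(unfold outward; lia)).
      pose proof (Hout (r + 1) ltac:(unfold outward; lia)).
      destruct (Z.eqb_spec r 0), (Z.leb_spec r 0), (Z.leb_spec 0 r); cbn [Z.b2z]; lia.
    - pose proof (Hin (r - 1) ltac:(unfold outward; lia)).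
      pose proof (Hout (r + 1) ltac:(unfold outward; lia)).
      destruct (Z.eqb_spec r 0), (Z.leb_spec r 0), (Z.leb_spec 0 r); cbn [Z.b2z]; lia. }
  destruct Hsides as [Hminus Hplus].
  split; [|split].
  - intros t Ht; destruct (outward_cases r t Ht) as [[Hr ->]|[Hr ->]].
    + rewrite Hplus; destruct (Z.leb_spec 0 r); cbn [Z.b2z]; lia.
    + rewrite Hminus; destruct (Z.leb_spec r 0); cbn [Z.b2z]; lia.
  - intros s Hs; destruct (outward_cases s r Hs) as [[Hr Hsr]|[Hr Hsr]].
    + replace s with (r - 1) by lia; rewrite Hminus; destruct (Z.leb_spec r 0); cbn [Z.b2z]; lia.
    + replace s with (r + 1) by lia; rewrite Hplus; destruct (Z.leb_spec 0 r); cbn [Z.b2z]; lia.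
  - rewrite chips_before_remaining, Hchips, Hminus, Hplus by lia.
    destruct (Z.eqb_spec r 0), (Z.leb_spec r 0), (Z.leb_spec 0 r); cbn [Z.b2z]; lia.
Qed.

Lemma staircase_succ (k : nat) : (k < length ms)%nat -> staircase m ms k -> staircase m ms (S k).
Proof.
  intros Hk Hstair s t Hst.
  set (r := fire_site ms k).
  assert (Hrem : forall u, remaining m ms (S k) u = remaining m ms k u - Z.b2z (r =? u))
    by (intros u; unfold remaining, r; rewrite fire_count_succ; lia).
  pose proof (Hstair s t Hst) as Hbefore; pose proof (tent_outward m s t Hst) as Htent.
  unfold capped_remaining in *; rewrite !Hrem.
  destruct (Z_le_gt_dec (remaining m ms k r) (tent m r)) as [Hcap|Hcap].
  - destruct (fire_site_neighbours k r Hk Hstair eq_refl Hcap) as (Hout & Hin & _).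
    destruct (Z.eqb_spec r s) as [<-|Hrs], (Z.eqb_spec r t) as [<-|Hrt]; cbn [Z.b2z].
    + destruct (outward_cases r r Hst) as [[_ Hr]|[_ Hr]]; lia.
    + rewrite (Hout t Hst); lia.
    + rewrite (Hin s Hst); lia.
    + lia.
  - destruct (Z.eqb_spec r s) as [<-|], (Z.eqb_spec r t) as [<-|]; cbn [Z.b2z]; lia.
Qed.

Lemma staircase_all (k : nat) : (k <= length ms)%nat -> staircase m ms k.
Proof.
  induction k as [|k IH]; intros Hk; [apply staircase_0|].
  apply staircase_succ; [lia | apply IH; lia].
Qed.

End ValidRun.

Lemma chips_final_le_1 (m : nat) (ms : list move) :
  complete_run m ms -> forall s, chips_before m ms (length ms) s <= 1.
Proof.
  intros [_ Hdistinct] s; unfold chips_before, config_before; rewrite firstn_all.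
  unfold chips_at.
  pose proof (NoDup_filter (fun c => after ms c =? s) (labels_NoDup m)) as Hnodup.
  assert (Hat : forall c, In c (filter (fun c => after ms c =? s) (labels m)) ->
                  is_label m c /\ after ms c = s)
    by (intros c Hc; apply filter_In in Hc as [Hc Hcs]; split; [exact Hc | now apply Z.eqb_eq]).
  destruct (filter _ (labels m)) as [|c [|c' cs]]; cbn [length]; try lia.
  inversion Hnodup as [|? ? Hc_notin]; subst.
  destruct (Hat c (or_introl eq_refl)) as [Hc Hcs],
    (Hat c' (or_intror (or_introl eq_refl))) as [Hc' Hc's].
  exfalso; apply (Hdistinct c c' Hc Hc'); [intros <-; apply Hc_notin; now left | congruence].
Qed.

Lemma fire_count_final (m : nat) (ms : list move) :
  complete_run m ms -> forall s, fire_count ms (length ms) s = final_odometer m s.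
Proof.
  intros Hc; pose proof (proj1 Hc) as Hv; pose proof (chips_final_le_1 m ms Hc) as Hle1.
  set (N := length ms) in *.
  enough (Hzero : forall s, remaining m ms N s = 0)
    by (intros s; specialize (Hzero s); unfold remaining in Hzero; lia).
  apply (convex_off_origin_zero _ (Z.of_nat m)).
  - intros s; exact (remaining_nonneg m ms Hv N s (le_n _)).
  - intros s Hs; pose proof (remaining_nonneg m ms Hv N s (le_n _)).
    pose proof (fire_count_nonneg ms N s).
    unfold remaining in *; rewrite final_odometer_vanishes in * by lia; lia.
  - intros s Hs; pose proof (chips_before_remaining m ms Hv N s (le_n _)).
    pose proof (Hle1 s); unfold final_chips in *.
    destruct (Z.eqb_spec s 0); [lia|]; destruct (Z.leb_spec (Z.abs s) (Z.of_nat m)); lia.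
  - pose proof (chips_before_remaining m ms Hv N 0 (le_n _)).
    pose proof (Hle1 0); unfold final_chips in *; cbn in *; lia.
Qed.

Lemma nth_error_filter_seq (P : nat -> bool) (n i k : nat) :
  nth_error (filter P (seq 0 n)) i = Some k ->
  (k < n)%nat /\ P k = true /\ i = length (filter P (seq 0 k)).
Proof.
  induction n as [|n IH]; intros Hi; [destruct i; discriminate|].
  rewrite seq_S, Nat.add_0_l, filter_app in Hi.
  destruct (Nat.lt_ge_cases i (length (filter P (seq 0 n)))) as [Hlt|Hge].
  - rewrite nth_error_app1 in Hi by exact Hlt.
    destruct (IH Hi) as (Hk & HP & Hidx); split; [lia | auto].
  - rewrite nth_error_app2 in Hi by exact Hge; cbn [filter] in Hi.
    destruct (P n) eqn:HP, (i - length (filter P (seq 0 n)))%nat as [|j] eqn:Hj;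
      cbn in Hi; try (destruct j; discriminate); try discriminate.
    injection Hi as <-; split; [lia | split; [exact HP | lia]].
Qed.

Lemma fmove_spec (m : nat) (ms : list move) (x y k : nat) :
  complete_run m ms -> fmove ms x y = Some k ->
  (k < length ms)%nat /\ fire_site ms k = Z.of_nat x - Z.of_nat y /\
  remaining m ms k (Z.of_nat x - Z.of_nat y) = Z.of_nat (Nat.min x y) + 1.
Proof.
  intros Hc Hf; unfold fmove, moves_at in Hf; rewrite nth_error_rev in Hf.
  set (s := Z.of_nat x - Z.of_nat y) in *.
  set (L := filter _ (seq 0 (length ms))) in Hf.
  destruct (Nat.ltb_spec (Nat.min x y) (length L)); [|discriminate].
  destruct (nth_error_filter_seq _ _ _ _ Hf) as (Hk & Hsite & Hidx).
  split; [exact Hk | split; [now apply Z.eqb_eq |]].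
  unfold remaining; rewrite <- (fire_count_final m ms Hc s); unfold fire_count.
  fold L; lia.
Qed.

Theorem lemma2p6 (m : nat) (ms : list move) (x y k : nat) :
  (1 <= m)%nat ->
  complete_run m ms ->
  (x <= m - 1)%nat -> (y <= m - 1)%nat ->
  fmove ms x y = Some k ->
  (forall k', fmove ms (S x) y = Some k' -> (k' < k)%nat) /\
  (forall k', fmove ms x (S y) = Some k' -> (k' < k)%nat) /\
  chips_at m (config_before ms k) (Z.of_nat x - Z.of_nat y)%Z = 2%nat.
Proof.
  intros Hm Hc Hx Hy Hf; pose proof (proj1 Hc) as Hv.
  destruct (fmove_spec m ms x y k Hc Hf) as (Hk & Hsite & Hrem).
  set (s := Z.of_nat x - Z.of_nat y) in *.
  assert (Hcap : remaining m ms k s <= tent m s) by (unfold tent; lia).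
  destruct (fire_site_neighbours m ms Hv k s Hk (staircase_all m ms Hv k ltac:(lia)) Hsite Hcap)
    as (Hout & Hin & Htwo).
  assert (Hearlier : forall x' y' k', (x' + y' = S (x + y))%nat -> (x <= x')%nat -> (y <= y')%nat ->
                       fmove ms x' y' = Some k' -> (k' < k)%nat).
  { intros x' y' k' Hsum Hx' Hy' Hf'.
    destruct (fmove_spec m ms x' y' k' Hc Hf') as (_ & _ & Hrem').
    destruct (Nat.lt_ge_cases k' k) as [|Hge]; [assumption | exfalso].
    set (t := Z.of_nat x' - Z.of_nat y') in *.
    pose proof (remaining_antitone m ms k k' t Hge).
    pose proof (Hout t); pose proof (Hin t); unfold outward in *; lia. }
  split; [|split]; [intros k'; apply Hearlier; lia .. |].
  unfold chips_before in Htwo; lia.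
Qed.
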